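(* Let $T_1$ and $T_2$ be $\pi$-increasing trees with disjoint vertex-sets, with $T_1$ irreducible. For $i=1,2$, let $m_i$ be the maximum element of $V(T_i)$. Let $v_2$ be a vertex of $T_2$ with $v_2<m_1$, and let $T=\mathrm{spl}(T_1,m_1;T_2,v_2)$. (a) If $m_1>m_2$, then $T$ is reducible; more precisely, $G_{m_1}(T)$ is the disjoint union $G_{m_1}(T_1)\sqcup G_{v_2}(T_2)$. (b) If $m_1<m_2$ and $T_2$ is irreducible, then $T$ is irreducible.
   Context: Standing assumptions: $r\ge2$ and $\pi$ is a set partition of $\{1,\dots,r\}$ having $\{1\}$ as a block; its blocks are $\pi_1,\dots,\pi_k$ with maxima $\mu_i=\max\pi_i$; $\pi^x$ denotes the block containing $x$. An unordered increasing tree is a rooted tree on distinct positive integers, sons unordered, each son larger than its father. A $\pi$-increasing tree is an unordered increasing tree $T$ whose vertex-set is a union of blocks of $\pi$ and such that for any two elements $i<j$ of a same block of $\pi$ contained in $V(T)$, $i$ is an ancestor of $j$ in $T$. $v$-decomposition: for a vertex $v$ of $T$ with chain $a_1<\dots<a_\ell=v$ from the root to $v$, removing the chain edges leaves components $T^{(a_j)}$ rooted at $a_j$. Splice: for unordered increasing trees $T_1,T_2$ with disjoint vertex-sets and $v_1\in V(T_1)$, $v_2\in V(T_2)$, $v_1>v_2$, $\mathrm{spl}(T_1,v_1;T_2,v_2)$ is the tree on $V(T_1)\cup V(T_2)$ obtained by merging the root-to-$v_1$ chain of $T_1$ and the root-to-$v_2$ chain of $T_2$ into one increasing chain (root = smallest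 element, ending at $v_1$) and attaching at each chain vertex its component from the $v_1$-decomposition of $T_1$ or the $v_2$-decomposition of $T_2$. $v$-dependence graph $G_v(T)$ of a $\pi$-increasing tree $T$: directed graph whose vertices are the blocks of $\pi$ contained in $V(T)$; for each such block $\pi_i$ whose maximum $\mu_i$ is not on the chain $a_1,\dots,a_\ell$ from the root to $v$, $\mu_i$ is a non-root vertex of a unique $T^{(a_j)}$ and there is an edge (possibly a loop) from $\pi_i$ to $\pi^{a_j}$; no other edges. A $\pi$-increasing tree with maximum vertex $M$ is irreducible if $G_M(T)$ is connected (ignoring directions), reducible otherwise. *)

From mathcomp Require Import all_boot.
Set Implicit Arguments. Unset Strict Implicit. Unset Printing Implicit Defensive.

(* Ground set {1,...,r} is represented inside 'I_(r.+1) (0 is never used). *)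
Definition ground (r : nat) : {set 'I_r.+1} := [set i : 'I_r.+1 | 0 < i].

(* A rooted tree with labelled vertices, given by its vertex set and a
   parent function (meaningful only on non-root vertices of V). *)
Record ptree (n : nat) := PTree { V : {set 'I_n}; par : 'I_n -> 'I_n }.
Arguments PTree {n}.

Section Trees.
Variable n : nat.
Implicit Types (T : ptree n.+1) (u v a : 'I_n.+1).

Definition root T : 'I_n.+1 := [arg min_(i < ord0 in V T) (i : nat)].
Definition vmax T : 'I_n.+1 := [arg max_(i > ord0 in V T) (i : nat)].

(* unordered increasing tree: nonempty, every non-root vertex has a
   parent in V which is smaller than it (hence root = min V and the
   parent map defines a rooted tree) *)
Definition increasing_tree T : Prop :=
  V T != set0 /\
  forall v, v \in V T -> v != root T -> (par T v \in V T) /\ (par T v < v).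

Definition up T (x : 'I_n.+1) : 'I_n.+1 := if x == root T then x else par T x.

Definition anc T a v : bool := [exists k : 'I_n.+2, iter k (up T) v == a].

Definition chain T v : {set 'I_n.+1} := [set a in V T | anc T a v].

Definition spl T1 v1 T2 v2 : ptree n.+1 :=
  let C := chain T1 v1 :|: chain T2 v2 in
  PTree (V T1 :|: V T2)
    (fun u => if u \in C then [arg max_(a > u | (a \in C) && (a < u)) (a : nat)]
              else if u \in V T1 then par T1 u else par T2 u).
End Trees.

Section PiTrees.
Variable r : nat.
Implicit Types (P : {set {set 'I_r.+1}}) (T : ptree r.+1) (v : 'I_r.+1).

Definition blocks P T : {set {set 'I_r.+1}} := [set B in P | B \subset V T].

Definition pi_increasing P T : Prop :=
  [/\ increasing_tree T,
      V T = \bigcup_(B in blocks P T) B &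
      forall B, B \in blocks P T -> forall i j, i \in B -> j \in B ->
        i < j -> anc T i j].

(* edge B -> C of the v-dependence graph G_v(T) *)
Definition gedge P T v (B C : {set 'I_r.+1}) : bool :=
  (B \in blocks P T) &&
  [exists m in B, [forall x in B, x <= m] && (m \notin chain T v) &&
     [exists a in chain T v,
        [&& anc T a m,
            [forall a' in chain T v, anc T a' m ==> (a' <= a)] &
            C == pblock P a]]].

Definition gconnected P T v : Prop :=
  forall B C, B \in blocks P T -> C \in blocks P T ->
    connect (fun X Y => gedge P T v X Y || gedge P T v Y X) B C.

Definition irreducible P T : Prop := gconnected P T (vmax T).
Definition reducible P T : Prop := ~ irreducible P T.
End PiTrees.

From mathcomp Require Import all_boot.
Set Implicit Arguments. Unset Strict Implicit. Unset Printing Implicit Defensive.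

(* In T = spl(T1,v1;T2,v2) the merged chain C = chain T1 v1 :|: chain T2 v2
   becomes the chain from the root to v1, and every other vertex u of T_i stays
   attached to the same vertex e of its old chain; its new ancestors are its
   old ones plus the vertices of the other chain lying below e.  Hence
   G_v1(T) = G_v1(T1) + G_v2(T2), and no edge joins a block of T1 to a block
   of T2: this is (a).  For (b), let c be the vertex of chain T2 v2 to which
   m2 = max T hangs.  Edges of G_m2(T2) survive in G_m2(T); an edge of G_m1(T1)
   either survives or has both endpoints pointing to the block of c, and so
   does the block of m1 since c <= v2 < m1.  The block of c therefore links
   the connected graphs G_m1(T1) and G_m2(T2). *)

(* [root] and [vmax] are arg-extrema with default index [ord0], which need not
   be a vertex. *)
Lemma extremum_default (T : eqType) (I : finType) (ord : rel T) (i0 x : I)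
    (P : pred I) (F : I -> T) :
  reflexive ord -> transitive ord -> total ord -> P x ->
  extremum ord i0 P F = extremum ord x P F.
Proof.
move=> ord_refl ord_trans ord_total Px; rewrite /extremum; case: pickP => [//|no_i].
have [i Pi min_i] := extremumP F ord_refl ord_trans ord_total Px.
have /negP[] := negbT (no_i i); rewrite /= Pi; apply/forall_inP; exact: min_i.
Qed.

Lemma arg_minn_inP (I : finType) (i0 x : I) (P : pred I) (F : I -> nat) :
  P x -> extremum_spec leq P F (arg_min i0 P F).
Proof.
move=> Px; rewrite /arg_min (extremum_default _ _ _ _ _ Px) //.
- exact: arg_minnP.
- exact: leq_trans.
- exact: leq_total.
Qed.

Lemma arg_maxn_inP (I : finType) (i0 x : I) (P : pred I) (F : I -> nat) :
  P x -> extremum_spec geq P F (arg_max i0 P F).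
Proof.
move=> Px; rewrite /arg_max (extremum_default _ _ _ _ _ Px) //.
- exact: arg_maxnP.
- exact: leqnn.
- by move=> ? ? ? /= le1 le2; apply: leq_trans le2 le1.
- by move=> ? ?; apply: leq_total.
Qed.

Lemma ord_ltn_ind m (Q : 'I_m -> Prop) :
  (forall u : 'I_m, (forall w : 'I_m, w < u -> Q w) -> Q u) -> forall u, Q u.
Proof.
move=> IH; suff QS k (u : 'I_m) : u < k -> Q u by move=> u; apply: (QS u.+1).
elim: k u => [//|k IHk] u lt_uk; apply: IH => w lt_wu.
by apply: IHk; apply: leq_trans lt_wu lt_uk.
Qed.

Section FconnectOrder.
Variables (T : finType) (f : T -> T).

Lemma fconnect_total x y z :
  fconnect f x y -> fconnect f x z -> fconnect f y z || fconnect f z y.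
Proof.
move=> /iter_findex xy /iter_findex xz.
case: (leqP (findex f x y) (findex f x z)) => [le_yz|/ltnW le_zy].
  by rewrite -xz -(subnK le_yz) iterD xy fconnect_iter.
by rewrite -xy -(subnK le_zy) iterD xz fconnect_iter orbT.
Qed.

Lemma fconnect_fixed x y : f x = x -> fconnect f x y -> y = x.
Proof. by move=> fx /iter_findex <-; elim: findex => //= k ->. Qed.

End FconnectOrder.

Lemma anc_fconnect n (T : ptree n.+1) a v : anc T a v = fconnect (up T) v a.
Proof.
apply/existsP/idP => [[k /eqP <-]|va]; first exact: fconnect_iter.
have lt_index : findex (up T) v a < n.+2.
  apply: leq_trans (findex_max va) _.
  by rewrite /order (leq_trans (max_card _)) ?card_ord.
by exists (Ordinal lt_index); rewrite /= iter_findex.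
Qed.

Lemma in_chain n (T : ptree n.+1) v a :
  (a \in chain T v) = (a \in V T) && fconnect (up T) v a.
Proof. by rewrite inE anc_fconnect. Qed.

Lemma chain_in n (T : ptree n.+1) v a : a \in chain T v -> a \in V T.
Proof. by rewrite in_chain => /andP[]. Qed.

Section TreeExtrema.
Variables (n : nat) (T : ptree n.+1).
Implicit Type v : 'I_n.+1.

Lemma vmax_eq m : m \in V T -> {in V T, forall v, v <= m} -> vmax T = m.
Proof.
move=> Vm max_m; rewrite /vmax.
case: (arg_maxn_inP ord0 (fun i : 'I_n.+1 => i : nat) Vm).
by move=> i Vi max_i; apply/val_inj/eqP; rewrite eqn_leq max_m //; exact: max_i.
Qed.

Hypothesis VT_neq0 : V T != set0.

Lemma root_in : root T \in V T.
Proof.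
case/set0Pn: VT_neq0 => x Vx; rewrite /root.
by case: (arg_minn_inP ord0 (fun i : 'I_n.+1 => i : nat) Vx).
Qed.

Lemma root_min v : v \in V T -> root T <= v.
Proof.
case/set0Pn: VT_neq0 => x Vx; rewrite /root.
by case: (arg_minn_inP ord0 (fun i : 'I_n.+1 => i : nat) Vx) => i _; apply.
Qed.

Lemma vmax_in : vmax T \in V T.
Proof.
case/set0Pn: VT_neq0 => x Vx; rewrite /vmax.
by case: (arg_maxn_inP ord0 (fun i : 'I_n.+1 => i : nat) Vx).
Qed.

Lemma vmax_max v : v \in V T -> v <= vmax T.
Proof.
case/set0Pn: VT_neq0 => x Vx; rewrite /vmax.
by case: (arg_maxn_inP ord0 (fun i : 'I_n.+1 => i : nat) Vx) => i _; apply.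
Qed.

End TreeExtrema.

Section IncreasingTree.
Variables (n : nat) (T : ptree n.+1).
Hypothesis HT : increasing_tree T.

Let VT_neq0 : V T != set0. Proof. by case: HT. Qed.

Lemma up_root : up T (root T) = root T.
Proof. by rewrite /up eqxx. Qed.

Lemma up_in v : v \in V T -> up T v \in V T.
Proof.
rewrite /up; case: eqP => // /eqP ne Vv.
by case: HT => _ /(_ v Vv ne)[].
Qed.

Lemma up_lt v : v \in V T -> v != root T -> up T v < v.
Proof. by move=> Vv ne; rewrite /up (negbTE ne); case: HT => _ /(_ v Vv ne)[]. Qed.

Lemma up_le v : v \in V T -> up T v <= v.
Proof.
move=> Vv; have [->|ne] := eqVneq v (root T); first by rewrite up_root.
exact/ltnW/up_lt.
Qed.

Lemma fconnect_up_in v a : v \in V T -> fconnect (up T) v a -> a \in V T.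
Proof. by move=> Vv /iter_findex <-; elim: findex => //= k; apply: up_in. Qed.

Lemma fconnect_up_le v a : v \in V T -> fconnect (up T) v a -> a <= v.
Proof.
move=> Vv /iter_findex <-; elim: findex => //= k le_kv.
apply: leq_trans le_kv; apply/up_le/(fconnect_up_in Vv)/fconnect_iter.
Qed.

Lemma fconnect_up_root v : v \in V T -> fconnect (up T) v (root T).
Proof.
elim/ord_ltn_ind: v => v IH Vv; rewrite fconnect_eqVf.
have [//|ne] := eqVneq v (root T).
by rewrite IH ?up_lt ?up_in.
Qed.

Lemma root_in_chain v : v \in V T -> root T \in chain T v.
Proof. by move=> Vv; rewrite in_chain root_in // fconnect_up_root. Qed.

Lemma fconnect_up_leq v a b : v \in V T ->
  fconnect (up T) v a -> fconnect (up T) v b -> b <= a -> fconnect (up T) a b.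
Proof.
move=> Vv va vb le_ba; case/orP: (fconnect_total va vb) => // ba.
have Vb := fconnect_up_in Vv vb.
have -> : a = b by apply/val_inj/eqP; rewrite eqn_leq (fconnect_up_le Vb ba) le_ba.
exact: connect0.
Qed.

Lemma chain_fconnect v x y : v \in V T ->
  x \in chain T v -> y \in chain T v -> x <= y -> fconnect (up T) y x.
Proof.
rewrite !in_chain => Vv /andP[_ vx] /andP[_ vy] le_xy.
exact: fconnect_up_leq Vv vy vx le_xy.
Qed.

End IncreasingTree.

(* [e] is the vertex a_j of the v-decomposition of [T] whose component
   T^(a_j) contains [u]. *)
Definition hangs_at n (T : ptree n.+1) v u e : Prop :=
  [/\ e \in chain T v, fconnect (up T) u e &
      forall x, x \in chain T v -> fconnect (up T) u x -> x <= e].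

Lemma hangs_at_unique n (T : ptree n.+1) v u a b :
  hangs_at T v u a -> hangs_at T v u b -> a = b.
Proof.
move=> [chain_a ua max_a] [chain_b ub max_b].
by apply/val_inj/eqP; rewrite eqn_leq max_b ?max_a.
Qed.

Section Regraft.
Variables (n : nat) (T Ti : ptree n.+1) (vi : 'I_n.+1) (C : {set 'I_n.+1}).
Hypotheses (HTi : increasing_tree Ti) (Vvi : vi \in V Ti)
  (fconnect_C : forall u a, u \in C -> fconnect (up T) u a = (a \in C) && (a <= u))
  (C_chain : forall u, u \in V Ti -> (u \in C) = (u \in chain Ti vi))
  (up_offC : forall u, u \in V Ti -> u \notin C -> up T u = up Ti u).

Lemma regraft_fconnect u : u \in V Ti -> exists2 e, hangs_at Ti vi u e &
  forall a, fconnect (up T) u a =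
            fconnect (up Ti) u a || [&& a \in C, a \notin V Ti & a <= e].
Proof.
elim/ord_ltn_ind: u => u IH Vu.
case chain_u: (u \in chain Ti vi).
  exists u; first by split=> // x _ /(fconnect_up_le HTi Vu).
  move=> a; rewrite fconnect_C; last by rewrite C_chain.
  have [Va|nVa] := boolP (a \in V Ti); last first.
    by rewrite (contraNF (fconnect_up_in HTi Vu) nVa).
  rewrite andbF orbF C_chain //.
  apply/andP/idP => [[chain_a le_au] | ua]; first exact: chain_fconnect chain_u le_au.
  split; last exact: fconnect_up_le ua.
  rewrite in_chain Va; apply: connect_trans ua.
  by move: chain_u; rewrite in_chain => /andP[].
have ne : u != root Ti.
  by apply: contraFneq chain_u => ->; exact: root_in_chain.
have [e [chain_e pe max_e] fconnect_p] := IH _ (up_lt HTi Vu ne) (up_in HTi Vu).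
exists e.
  split=> // [|x chain_x]; first exact: connect_trans (fconnect1 _ _) pe.
  rewrite fconnect_eqVf => /predU1P[xu|]; last exact: max_e.
  by rewrite -xu chain_u in chain_x.
move=> a; rewrite fconnect_eqVf [fconnect (up Ti) u a]fconnect_eqVf.
rewrite (up_offC Vu) ?fconnect_p ?orbA //.
by rewrite C_chain ?chain_u.
Qed.

End Regraft.

Section Splice.
Variables (r : nat) (T1 T2 : ptree r.+1) (v1 v2 : 'I_r.+1).
Hypotheses (HT1 : increasing_tree T1) (HT2 : increasing_tree T2)
  (disjV : [disjoint V T1 & V T2]) (Vv1 : v1 \in V T1) (Vv2 : v2 \in V T2)
  (lt_v21 : v2 < v1).

Local Notation T := (spl T1 v1 T2 v2).
Local Notation C := (chain T1 v1 :|: chain T2 v2).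

Lemma spl_chain_in a : a \in C -> a \in V T.
Proof. by rewrite inE => /orP[]/chain_in Va; rewrite inE Va ?orbT. Qed.

Lemma spl_chain_le a : a \in C -> a <= v1.
Proof.
rewrite inE !in_chain => /orP[]/andP[_ va]; first exact: fconnect_up_le va.
exact/ltnW/(leq_ltn_trans (fconnect_up_le HT2 Vv2 va)).
Qed.

Lemma spl_chain1 a : a \in V T1 -> (a \in C) = (a \in chain T1 v1).
Proof.
move=> Va; rewrite inE.
case: (boolP (a \in chain T2 v2)) => [/chain_in|]; last by rewrite orbF.
by rewrite (disjointFr disjV Va).
Qed.

Lemma spl_chain2 a : a \in V T2 -> (a \in C) = (a \in chain T2 v2).
Proof.
move=> Va; rewrite inE; case: (boolP (a \in chain T1 v1)) => [/chain_in|] //.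
by rewrite (disjointFl disjV Va).
Qed.

Lemma spl_chain_notV1 a : (a \in C) && (a \notin V T1) = (a \in chain T2 v2).
Proof.
have [Va|nVa] := boolP (a \in V T1); rewrite ?andbF ?andbT.
  by apply/esym/(contraFF (@chain_in _ _ _ _)); rewrite (disjointFr disjV Va).
by rewrite inE (contraNF (@chain_in _ T1 v1 a) nVa).
Qed.

Lemma spl_chain_notV2 a : (a \in C) && (a \notin V T2) = (a \in chain T1 v1).
Proof.
have [Va|nVa] := boolP (a \in V T2); rewrite ?andbF ?andbT.
  by apply/esym/(contraFF (@chain_in _ _ _ _)); rewrite (disjointFl disjV Va).
by rewrite inE (contraNF (@chain_in _ T2 v2 a) nVa) orbF.
Qed.

Let VT_neq0 : V T != set0. Proof. by apply/set0Pn; exists v1; rewrite inE Vv1. Qed.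

Lemma spl_root_in_chain : root T \in C.
Proof.
have := root_in VT_neq0; rewrite inE => /orP[] Vr.
  have -> : root T = root T1.
    apply/val_inj/eqP; rewrite eqn_leq (root_min HT1.1) //.
    by rewrite root_min // inE (root_in HT1.1).
  by rewrite inE root_in_chain.
have -> : root T = root T2.
  apply/val_inj/eqP; rewrite eqn_leq (root_min HT2.1) //.
  by rewrite root_min // inE (root_in HT2.1) orbT.
by rewrite inE root_in_chain ?orbT.
Qed.

Lemma spl_up_chain u : u \in C -> u != root T ->
  [/\ up T u \in C, up T u < u & forall a, a \in C -> a < u -> a <= up T u].
Proof.
move=> Cu ne; rewrite /up (negbTE ne) /= Cu.
have lt_root : (root T \in C) && (root T < u).
  rewrite spl_root_in_chain ltn_neqAle val_eqE eq_sym ne.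
  exact/root_min/spl_chain_in.
have [p /andP[Cp lt_pu] max_p] :=
  arg_maxn_inP u (P := fun a => (a \in C) && (a < u)) (fun i : 'I_r.+1 => i : nat) lt_root.
by split=> // a Ca lt_au; apply: max_p; rewrite Ca.
Qed.

Lemma spl_up1 u : u \in V T1 -> u \notin C -> up T u = up T1 u.
Proof.
move=> Vu nCu.
have ne : u != root T by apply: contraNneq nCu => ->; exact: spl_root_in_chain.
have ne1 : u != root T1 by apply: contraNneq nCu => ->; rewrite inE root_in_chain.
by rewrite /up (negbTE ne) (negbTE ne1) /= (negbTE nCu) Vu.
Qed.

Lemma spl_up2 u : u \in V T2 -> u \notin C -> up T u = up T2 u.
Proof.
move=> Vu nCu.
have ne : u != root T by apply: contraNneq nCu => ->; exact: spl_root_in_chain.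
have ne2 : u != root T2 by apply: contraNneq nCu => ->; rewrite inE root_in_chain ?orbT.
by rewrite /up (negbTE ne) (negbTE ne2) /= (negbTE nCu) (disjointFl disjV Vu).
Qed.

Lemma spl_fconnect_chain u a : u \in C -> fconnect (up T) u a = (a \in C) && (a <= u).
Proof.
elim/ord_ltn_ind: u a => u IH a Cu.
have [ur|ne] := eqVneq u (root T).
  apply/idP/andP => [ua|[Ca le_au]].
    have fixed_u : up T u = u by rewrite ur up_root.
    by rewrite (fconnect_fixed fixed_u ua) Cu leqnn.
  have -> : a = u.
    by apply/val_inj/eqP; rewrite eqn_leq le_au ur root_min ?spl_chain_in.
  exact: connect0.
have [Cp lt_pu max_p] := spl_up_chain Cu ne.
rewrite fconnect_eqVf IH //.
have [<-|ne_ua] := eqVneq u a; first by rewrite Cu leqnn.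
apply: andb_id2l => Ca; apply/idP/idP => [le_ap|le_au].
  exact: leq_trans le_ap (ltnW lt_pu).
by apply: max_p; rewrite // ltn_neqAle le_au andbT val_eqE eq_sym.
Qed.

Lemma chain_spl : chain T v1 = C.
Proof.
have Cv1 : v1 \in C by rewrite inE in_chain Vv1 connect0.
apply/setP => a; rewrite in_chain spl_fconnect_chain //.
apply/andP/idP => [[_ /andP[]] //|Ca].
by rewrite spl_chain_in // Ca spl_chain_le.
Qed.

Lemma spl_regraft1 u : u \in V T1 -> exists2 e, hangs_at T1 v1 u e &
  forall a, fconnect (up T) u a =
            fconnect (up T1) u a || (a \in chain T2 v2) && (a <= e).
Proof.
move=> Vu.
have [e hang_e fconnect_u] :=
  regraft_fconnect (T := T) HT1 Vv1 spl_fconnect_chain spl_chain1 spl_up1 Vu.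
by exists e => // a; rewrite fconnect_u andbA spl_chain_notV1.
Qed.

Lemma spl_regraft2 u : u \in V T2 -> exists2 e, hangs_at T2 v2 u e &
  forall a, fconnect (up T) u a =
            fconnect (up T2) u a || (a \in chain T1 v1) && (a <= e).
Proof.
move=> Vu.
have [e hang_e fconnect_u] :=
  regraft_fconnect (T := T) HT2 Vv2 spl_fconnect_chain spl_chain2 spl_up2 Vu.
by exists e => // a; rewrite fconnect_u andbA spl_chain_notV2.
Qed.

End Splice.

Lemma gedgeP r (P : {set {set 'I_r.+1}}) (T : ptree r.+1) v B Y :
  reflect (B \in blocks P T /\
           exists m, [/\ m \in B, forall x, x \in B -> x <= m, m \notin chain T v &
                         exists2 a, hangs_at T v m a & Y = pblock P a])
          (gedge P T v B Y).
Proof.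
apply: (iffP andP) => [[PB /exists_inP[m mB /andP[/andP[/forall_inP max_m chain_m]]]] |
                       [PB [m [mB max_m chain_m [a [chain_a ma max_a] ->]]]]].
  move=> /exists_inP[a chain_a /and3P[ma /forall_inP max_a /eqP ->]].
  split=> //; exists m; split=> //; exists a => //.
  split=> //; first by rewrite -anc_fconnect.
  by move=> x chain_x mx; apply: (implyP (max_a x chain_x)); rewrite anc_fconnect.
split=> //; apply/exists_inP; exists m; rewrite // chain_m andbT.
apply/andP; split; first exact/forall_inP.
apply/exists_inP; exists a; rewrite // anc_fconnect ma eqxx andbT.
by apply/forall_inP => x chain_x; apply/implyP; rewrite anc_fconnect; apply: max_a.
Qed.

Section PiTree.
Variables (r : nat) (P : {set {set 'I_r.+1}}) (T : ptree r.+1).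
Hypotheses (trivP : trivIset P) (HT : pi_increasing P T).

Lemma blocks_sub B x : B \in blocks P T -> x \in B -> x \in V T.
Proof. by rewrite inE => /andP[_ /subsetP]; apply. Qed.

Lemma pblock_blocks x : x \in V T -> pblock P x \in blocks P T.
Proof.
case: HT => _ -> _ /bigcupP[B TB xB].
by move: (TB); rewrite inE => /andP[PB _]; rewrite (def_pblock trivP PB xB).
Qed.

Lemma mem_pblock_V x : x \in V T -> x \in pblock P x.
Proof.
case: HT => _ -> _ /bigcupP[B TB xB].
by move: (TB); rewrite inE => /andP[PB _]; rewrite (def_pblock trivP PB xB).
Qed.

Lemma block_max_fconnect B x : B \in blocks P T -> x \in B ->
  exists m, [/\ m \in B, forall y, y \in B -> y <= m & fconnect (up T) m x].
Proof.
move=> TB xB.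
case: (arg_maxn_inP x (P := mem B) (fun i : 'I_r.+1 => i : nat) xB) => m mB max_m.
exists m; split=> //; have [<-|ne] := eqVneq x m; first exact: connect0.
rewrite -anc_fconnect; case: HT => _ _ /(_ B TB x m xB mB); apply.
by rewrite ltn_neqAle val_eqE ne; apply: max_m.
Qed.

End PiTree.

Section RegraftGedge.
Variables (r : nat) (P : {set {set 'I_r.+1}}) (T Ti : ptree r.+1) (w vi : 'I_r.+1)
  (C D : {set 'I_r.+1}).
Hypotheses (HTi : increasing_tree Ti)
  (regraft : forall u, u \in V Ti -> exists2 e, hangs_at Ti vi u e &
     forall a, fconnect (up T) u a = fconnect (up Ti) u a || (a \in D) && (a <= e))
  (C_chain : forall u, u \in V Ti -> (u \in C) = (u \in chain Ti vi))
  (chainT : chain T w = C).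

Lemma regraft_hangs_at u a : u \in V Ti -> hangs_at T w u a <-> hangs_at Ti vi u a.
Proof.
move=> Vu; have [e hang_e fconnect_u] := regraft Vu.
suff hangT : hangs_at T w u e.
  split=> hang_a; first by rewrite (hangs_at_unique hang_a hangT).
  by rewrite (hangs_at_unique hang_a hang_e).
have [chain_e ue max_e] := hang_e.
split; first by rewrite chainT C_chain // (chain_in chain_e).
  by rewrite fconnect_u ue.
move=> x; rewrite chainT fconnect_u => Cx /orP[ux|/andP[]//].
apply: (max_e x _ ux).
by rewrite -C_chain // (fconnect_up_in HTi Vu ux).
Qed.

Lemma regraft_gedge B Y : B \in blocks P Ti -> B \in blocks P T ->
  gedge P T w B Y = gedge P Ti vi B Y.
Proof.
move=> TiB TB.
have chain_eq m : m \in B -> (m \in chain T w) = (m \in chain Ti vi).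
  by move=> mB; rewrite chainT C_chain ?(blocks_sub TiB mB).
apply/gedgeP/gedgeP => -[_ [m [mB max_m chain_m [a hang_a ->]]]];
  have Vm := blocks_sub TiB mB; split=> //; exists m.
  split=> //; first by rewrite -chain_eq.
  by exists a => //; apply/(regraft_hangs_at _ Vm).
split=> //; first by rewrite chain_eq.
by exists a => //; apply/(regraft_hangs_at _ Vm).
Qed.

End RegraftGedge.

Section SpliceDependence.
Variables (r : nat) (P : {set {set 'I_r.+1}}) (T1 T2 : ptree r.+1) (v1 v2 : 'I_r.+1).
Hypotheses (partP : partition P (ground r))
  (HT1 : pi_increasing P T1) (HT2 : pi_increasing P T2)
  (disjV : [disjoint V T1 & V T2]) (Vv1 : v1 \in V T1) (Vv2 : v2 \in V T2)
  (lt_v21 : v2 < v1).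

Let trivP : trivIset P. Proof. by case/and3P: partP. Qed.
Let P_neq0 : set0 \notin P. Proof. by case/and3P: partP. Qed.
Let inc1 : increasing_tree T1. Proof. by case: HT1. Qed.
Let inc2 : increasing_tree T2. Proof. by case: HT2. Qed.

Local Notation T := (spl T1 v1 T2 v2).

Let regraft1 := spl_regraft1 inc1 inc2 disjV Vv1 Vv2.
Let regraft2 := spl_regraft2 inc1 inc2 disjV Vv1 Vv2.

Lemma blocks_spl : blocks P T = blocks P T1 :|: blocks P T2.
Proof.
apply/setP => B; rewrite !inE; case PB: (B \in P) => //=.
apply/idP/idP => [sBV|/orP[] sBV]; last 2 first.
- exact: subset_trans sBV (subsetUl _ _).
- exact: subset_trans sBV (subsetUr _ _).
have /set0Pn[x xB] : B != set0 by apply: contraNneq P_neq0 => <-.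
move/subsetP: sBV => /(_ x xB); rewrite inE => /orP[] Vx.
  move: (pblock_blocks trivP HT1 Vx).
  by rewrite (def_pblock trivP PB xB) inE PB => /andP[_ ->].
move: (pblock_blocks trivP HT2 Vx).
by rewrite (def_pblock trivP PB xB) inE PB => /andP[_ ->]; rewrite orbT.
Qed.

Lemma disjoint_blocks : [disjoint blocks P T1 & blocks P T2].
Proof.
rewrite disjoint_subset; apply/subsetP => B T1B; apply/negP => T2B.
have /set0Pn[x xB] : B != set0.
  by apply: contraTneq T1B => ->; rewrite inE (negbTE P_neq0).
by move: (disjointFr disjV (blocks_sub T1B xB)); rewrite (blocks_sub T2B xB).
Qed.

Let chainT : chain T v1 = chain T1 v1 :|: chain T2 v2.
Proof. exact: chain_spl. Qed.

Lemma gedge_spl B Y : gedge P T v1 B Y = gedge P T1 v1 B Y || gedge P T2 v2 B Y.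
Proof.
case T1B: (B \in blocks P T1).
  have -> : gedge P T2 v2 B Y = false by rewrite /gedge (disjointFr disjoint_blocks T1B).
  have TB : B \in blocks P T by rewrite blocks_spl inE T1B.
  by rewrite orbF (regraft_gedge inc1 regraft1 (spl_chain1 v1 v2 disjV) chainT Y T1B TB).
case T2B: (B \in blocks P T2).
  have -> : gedge P T1 v1 B Y = false by rewrite /gedge T1B.
  have TB : B \in blocks P T by rewrite blocks_spl inE T2B orbT.
  by rewrite (regraft_gedge inc2 regraft2 (spl_chain2 v1 v2 disjV) chainT Y T2B TB).
by rewrite /gedge blocks_spl inE T1B T2B.
Qed.

Lemma gedge_spl_blocks1 X Y :
  gedge P T v1 X Y -> (X \in blocks P T1) = (Y \in blocks P T1).
Proof.
rewrite gedge_spl => /orP[] /gedgeP[TiX [m [_ _ _ [a [chain_a _ _] ->]]]].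
  by rewrite TiX (pblock_blocks trivP HT1 (chain_in chain_a)).
rewrite (disjointFl disjoint_blocks TiX).
by rewrite (disjointFl disjoint_blocks (pblock_blocks trivP HT2 (chain_in chain_a))).
Qed.

Lemma spl_not_gconnected : ~ gconnected P T v1.
Proof.
move=> conn.
have T1B := pblock_blocks trivP HT1 Vv1; have T2B := pblock_blocks trivP HT2 Vv2.
have closed1 : closed (fun X Y => gedge P T v1 X Y || gedge P T v1 Y X) (blocks P T1).
  by move=> X Y /orP[] /gedge_spl_blocks1 ->.
have TB1 : pblock P v1 \in blocks P T by rewrite blocks_spl inE T1B.
have TB2 : pblock P v2 \in blocks P T by rewrite blocks_spl inE T2B orbT.
have := closed_connect closed1 (conn _ _ TB1 TB2).
by rewrite T1B (disjointFl disjoint_blocks T2B).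
Qed.


Section Connected.
Variables (w c : 'I_r.+1).
Hypotheses (Vw : w \in V T2) (hang_c : hangs_at T2 v2 w c)
  (fconnect_w : forall a,
     fconnect (up T) w a = fconnect (up T2) w a || (a \in chain T1 v1) && (a <= c)).

Let chain2_c : c \in chain T2 v2. Proof. by case: hang_c. Qed.
Let wc : fconnect (up T2) w c. Proof. by case: hang_c. Qed.
Let V2c : c \in V T2. Proof. exact: chain_in chain2_c. Qed.

Lemma chain_spl_hang a :
  (a \in chain T w) = fconnect (up T2) w a || (a \in chain T1 v1) && (a <= c).
Proof.
rewrite in_chain fconnect_w andb_idl // => /orP[].
  by move/(fconnect_up_in inc2 Vw) => Va; rewrite inE Va orbT.
by case/andP=> /chain_in Va _; rewrite inE Va.
Qed.

Lemma gedge_spl2 X Y : gedge P T2 w X Y -> gedge P T w X Y.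
Proof.
move=> /gedgeP[T2X [m [mX max_m chain_m [a [chain_a ma max_a] ->]]]].
have Vm := blocks_sub T2X mX.
have [e [chain_e me _] fconnect_m] := regraft2 Vm.
have below_a x : fconnect (up T2) w x -> fconnect (up T2) m x -> x <= a.
  by move=> wx; apply: max_a; rewrite in_chain wx (fconnect_up_in inc2 Vw wx).
apply/gedgeP; split; first by rewrite blocks_spl inE T2X orbT.
exists m; split=> //.
  rewrite chain_spl_hang negb_or; apply/andP; split.
    by apply: contra chain_m => wm; rewrite in_chain Vm.
  by apply/negP => /andP[/chain_in]; rewrite (disjointFl disjV Vm).
exists a => //; split.
- by move: chain_a; rewrite in_chain chain_spl_hang => /andP[_ ->].
- by rewrite fconnect_m ma.
move=> x; rewrite chain_spl_hang fconnect_m.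
case/orP=> [wx|/andP[chain1_x le_xc]] /orP[mx|/andP[chain1_x' le_xe]].
- exact: below_a.
- by move: (fconnect_up_in inc2 Vw wx); rewrite (disjointFr disjV (chain_in chain1_x')).
- by move: (fconnect_up_in inc2 Vm mx); rewrite (disjointFr disjV (chain_in chain1_x)).
(* The smaller of c and e is a common T2-ancestor of w and m. *)
have [le_ce|/ltnW le_ec] := leqP c e.
  apply: leq_trans le_xc (below_a c wc _).
  exact: connect_trans me (chain_fconnect inc2 Vv2 chain2_c chain_e le_ce).
apply: leq_trans le_xe (below_a e _ me).
exact: connect_trans wc (chain_fconnect inc2 Vv2 chain_e chain2_c le_ec).
Qed.

Lemma gedge_spl_hang1 X m y : X \in blocks P T1 -> m \in X ->
  (forall x, x \in X -> x <= m) -> y \in chain T1 v1 -> fconnect (up T1) m y ->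
  c < y -> gedge P T w X (pblock P c).
Proof.
move=> T1X mX max_m chain_y my lt_cy.
have Vm := blocks_sub T1X mX.
have [e [chain_e me max_e] fconnect_m] := regraft1 Vm.
have le_ye : y <= e := max_e y chain_y my.
apply/gedgeP; split; first by rewrite blocks_spl inE T1X.
exists m; split=> //.
  rewrite chain_spl_hang negb_or; apply/andP; split.
    by apply/negP => /(fconnect_up_in inc2 Vw); rewrite (disjointFr disjV Vm).
  apply/negP => /andP[_ le_mc].
  by have := leq_trans (fconnect_up_le inc1 Vm my) le_mc; rewrite leqNgt lt_cy.
exists c => //; split.
- by rewrite chain_spl_hang wc.
- by rewrite fconnect_m chain2_c (leq_trans (ltnW lt_cy) le_ye) orbT.
move=> x; rewrite chain_spl_hang fconnect_m.
case/orP=> [wx|/andP[_ //]] /orP[mx|/andP[chain2_x _]].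
  have V1x := fconnect_up_in inc1 Vm mx.
  by move: (fconnect_up_in inc2 Vw wx); rewrite (disjointFr disjV V1x).
by case: hang_c => _ _; apply.
Qed.

Lemma gedge_spl1 X Y : gedge P T1 v1 X Y ->
  gedge P T w X Y \/ gedge P T w X (pblock P c) /\ gedge P T w Y (pblock P c).
Proof.
move=> /gedgeP[T1X [m [mX max_m chain_m [a hang_a ->]]]].
have [chain_a ma max_a] := hang_a.
have Vm := blocks_sub T1X mX; have Va := chain_in chain_a.
case: (ltngtP a c) => [lt_ac|lt_ca|eq_ac]; last first.
- by move: (disjointFr disjV Va); rewrite (val_inj eq_ac) V2c.
- have T1Y := pblock_blocks trivP HT1 Va.
  have [mY [mYY max_mY mYa]] := block_max_fconnect HT1 T1Y (mem_pblock_V trivP HT1 Va).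
  right; split.
    exact: gedge_spl_hang1 T1X mX max_m chain_a ma lt_ca.
  exact: gedge_spl_hang1 T1Y mYY max_mY chain_a mYa lt_ca.
left; have [e hang_e fconnect_m] := regraft1 Vm.
rewrite -(hangs_at_unique hang_a hang_e) in fconnect_m.
apply/gedgeP; split; first by rewrite blocks_spl inE T1X.
exists m; split=> //.
  rewrite chain_spl_hang negb_or negb_and chain_m andbT.
  by apply/negP => /(fconnect_up_in inc2 Vw); rewrite (disjointFr disjV Vm).
exists a => //; split.
- by rewrite chain_spl_hang chain_a (ltnW lt_ac) orbT.
- by rewrite fconnect_m ma.
move=> x; rewrite chain_spl_hang fconnect_m.
case/orP=> [wx|/andP[chain1_x _]] /orP[mx|/andP[_ //]].
  have V1x := fconnect_up_in inc1 Vm mx.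
  by move: (fconnect_up_in inc2 Vw wx); rewrite (disjointFr disjV V1x).
exact: max_a.
Qed.

Lemma gconnected_spl_hang : gconnected P T1 v1 -> gconnected P T2 w -> gconnected P T w.
Proof.
move=> conn1 conn2.
pose G X Y := gedge P T w X Y || gedge P T w Y X.
set B0 := pblock P c.
have G_sym : connect_sym G by apply: sym_connect_sym => X Y; rewrite /G orbC.
have edge_B0 X : gedge P T w X B0 -> connect G X B0.
  by move=> XB0; apply: connect1; rewrite /G XB0.
have T2_B0 W : W \in blocks P T2 -> connect G W B0.
  move=> T2W; apply: connect_sub (conn2 _ _ T2W (pblock_blocks trivP HT2 V2c)).
  by move=> X Y /orP[] /gedge_spl2 XY; apply: connect1; rewrite /G XY ?orbT.
have closed_B0 : closed (fun X Y => gedge P T1 v1 X Y || gedge P T1 v1 Y X)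
                        [pred X | connect G X B0].
  move=> X Y; rewrite !inE => /orP[] /gedge_spl1 [XY|[XB0 YB0]].
  - by apply: (same_connect1 G_sym); rewrite /G XY.
  - by rewrite !edge_B0.
  - by apply: (same_connect1 G_sym); rewrite /G XY orbT.
  - by rewrite !edge_B0.
have T1_B0 W : W \in blocks P T1 -> connect G W B0.
  have T1X0 := pblock_blocks trivP HT1 Vv1.
  have [m [mX0 max_m mv1]] := block_max_fconnect HT1 T1X0 (mem_pblock_V trivP HT1 Vv1).
  have chain_v1 : v1 \in chain T1 v1 by rewrite in_chain Vv1 connect0.
  have lt_cv1 : c < v1.
    move: chain2_c; rewrite in_chain => /andP[_ /(fconnect_up_le inc2 Vv2)].
    by move/leq_ltn_trans; apply.
  have X0_B0 := edge_B0 _ (gedge_spl_hang1 T1X0 mX0 max_m chain_v1 mv1 lt_cv1).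
  by move=> T1W; have := closed_connect closed_B0 (conn1 _ _ T1W T1X0); rewrite !inE X0_B0.
have to_B0 Z : Z \in blocks P T -> connect G Z B0.
  by rewrite blocks_spl in_setU => /orP[/T1_B0|/T2_B0].
by move=> X Y /to_B0 XB0 /to_B0 YB0; apply: connect_trans XB0 _; rewrite G_sym.
Qed.

End Connected.

Lemma gconnected_spl w : w \in V T2 ->
  gconnected P T1 v1 -> gconnected P T2 w -> gconnected P T w.
Proof.
move=> Vw; have [c hang_c fconnect_w] := regraft2 Vw.
exact: gconnected_spl_hang Vw hang_c fconnect_w.
Qed.

End SpliceDependence.

Lemma vmax_spl r (T1 T2 : ptree r.+1) v1 v2 : V T1 != set0 -> V T2 != set0 ->
  vmax (spl T1 v1 T2 v2) = if vmax T1 <= vmax T2 then vmax T2 else vmax T1.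
Proof.
move=> VT1_neq0 VT2_neq0.
case: leqP => [le_12|/ltnW le_21]; apply: vmax_eq; rewrite ?inE ?vmax_in ?orbT // => v;
  rewrite in_setU => /orP[/(vmax_max VT1_neq0)|/(vmax_max VT2_neq0)] le_v //;
  exact: leq_trans le_v _.
Qed.

Theorem lemma3p5 (r : nat) (P : {set {set 'I_r.+1}}) (T1 T2 : ptree r.+1)
  (v2 : 'I_r.+1) :
  2 <= r ->
  partition P (ground r) ->
  [set (inord 1 : 'I_r.+1)] \in P ->
  pi_increasing P T1 -> pi_increasing P T2 ->
  [disjoint V T1 & V T2] ->
  irreducible P T1 ->
  v2 \in V T2 -> v2 < vmax T1 ->
  let T := spl T1 (vmax T1) T2 v2 in
  (vmax T2 < vmax T1 ->
     reducible P T /\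
     [/\ blocks P T = blocks P T1 :|: blocks P T2,
         [disjoint blocks P T1 & blocks P T2] &
         forall B C, gedge P T (vmax T1) B C =
                     gedge P T1 (vmax T1) B C || gedge P T2 v2 B C]) /\
  (vmax T1 < vmax T2 -> irreducible P T2 -> irreducible P T).
Proof.
move=> _ partP _ HT1 HT2 disjV conn1 Vv2 lt_v2m1 T.
have [[VT1_neq0 _] _ _] := HT1; have [[VT2_neq0 _] _ _] := HT2.
have Vm1 := vmax_in VT1_neq0.
split=> [lt_m21 | lt_m12 conn2].
  have vmaxT : vmax T = vmax T1 by rewrite /T vmax_spl // leqNgt lt_m21.
  split; first by rewrite /reducible /irreducible vmaxT; apply: spl_not_gconnected.
  split; [exact: blocks_spl | exact: disjoint_blocks | exact: gedge_spl].
have vmaxT : vmax T = vmax T2 by rewrite /T vmax_spl // ltnW.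
by rewrite /irreducible vmaxT; apply: gconnected_spl; rewrite ?vmax_in.
Qed.
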